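(* Let $C\subseteq\mathbb{F}_q^n$ be a constant weight linear code with parity check matrix $H_C$ and associated matroid $\Delta=\Delta(H_C)$, and let $C'$ be a subcode of $C$ with parity check matrix $H_{C'}$ and associated matroid $\Delta'=\Delta(H_{C'})$ (both on the ground set $\{1,\dots,n\}$). If $\sigma\subseteq\mathrm{Supp}(C')$, then $\Delta'|_\sigma=\Delta|_\sigma$. In particular, for every $i$, the $\mathbb{N}^n$-graded Betti numbers satisfy $\beta_{i,\sigma}(R(C'))=\beta_{i,\sigma}(R(C))$.
   Context: A constant weight code is a linear code whose non-zero codewords all have the same number of non-zero coordinates; a subcode is a linear subspace; $\mathrm{Supp}(D)=\{x:\exists d\in D,\ d_x\neq0\}$. For a linear code $D\subseteq\mathbb{F}_q^n$ of dimension $m$, a parity check matrix $H_D$ is an $(n-m)\times n$ matrix with $c\in D$ iff $cH_D^t=0$; $\Delta(H_D)$ is the matroid on $\{1,\dots,n\}$ whose independent sets are the index sets of linearly independent columns of $H_D$, regarded as a simplicial complex; $\Delta|_\sigma$ is the restriction $\{\tau\in\Delta:\tau\subseteq\sigma\}$. For a field $\mathbb{K}$ and $S=\mathbb{K}[x_1,\dots,x_n]$, $R(D)=S/I_{\Delta(H_D)}$ where $I_\Delta=\langle\prod_{e\in\tau}x_e:\tau\notin\Delta\rangle$ is the Stanley-Reisner ideal; $\beta_{i,\sigma}$ (for $\sigma\subseteq\{1,\dots,n\}$, identified with its $0/1$ indicator vector in $\mathbb{N}^n$) is the number of copies of $S(-\sigma)$ in the $i$-th module of the minimal $\mathbb{N}^n$-graded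 free resolution of $R(D)$. *)

From HB Require Import structures.
From mathcomp Require Import all_boot all_order all_algebra all_field.
Set Implicit Arguments. Unset Strict Implicit. Unset Printing Implicit Defensive.
Import GRing.Theory.
Local Open Scope ring_scope.

(* A linear code D of F^n is represented as the row space of a matrix
   (a generator matrix) D : 'M[F]_(k, n); c \in D  is  (c <= D)%MS. *)

Definition wt (F : fieldType) (n : nat) (c : 'rV[F]_n) : nat :=
  #|[set j : 'I_n | c 0 j != 0]|.

Definition constant_weight (F : fieldType) (n k : nat) (D : 'M[F]_(k, n)) : Prop :=
  exists w : nat, forall c : 'rV[F]_n, (c <= D)%MS -> c != 0 -> wt c = w.

Definition is_parity_check (F : fieldType) (n k r : nat)
    (D : 'M[F]_(k, n)) (H : 'M[F]_(r, n)) : Prop :=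
  (r + \rank D)%N = n /\
  forall c : 'rV[F]_n, (c <= D)%MS <-> c *m H^T = 0.

Definition supp (F : finFieldType) (n k : nat) (D : 'M[F]_(k, n)) : {set 'I_n} :=
  [set x : 'I_n | [exists d : 'rV[F]_n, (d <= D)%MS && (d 0 x != 0)]].

Definition indep_cols (F : fieldType) (n r : nat) (H : 'M[F]_(r, n))
    (tau : {set 'I_n}) : bool :=
  \rank (colsub (fun i : 'I_#|tau| => enum_val i) H) == #|tau|.

Definition matroid (F : fieldType) (n r : nat) (H : 'M[F]_(r, n))
    : {set {set 'I_n}} :=
  [set tau : {set 'I_n} | indep_cols H tau].

Definition restrict (n : nat) (D : {set {set 'I_n}}) (sigma : {set 'I_n})
    : {set {set 'I_n}} :=
  [set tau in D | tau \subset sigma].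

(* beta_{i,sigma}(K[D]) = dim_K Tor_i^S(K[D], K)_sigma, computed by the Koszul
   complex K(x_1..x_n) (x) K[D] in multidegree sigma (a 0/1 vector).
   Its degree-i part has K-basis  e_tau (x) x^(sigma \ tau)  with tau \subset sigma,
   #|tau| = i and x^(sigma\tau) <> 0 in K[D], i.e. sigma \ tau a face of D. *)
Definition kbasis (n : nat) (D : {set {set 'I_n}}) (sigma : {set 'I_n}) (i : nat)
    : {set {set 'I_n}} :=
  [set tau : {set 'I_n} | [&& tau \subset sigma, #|tau| == i & (sigma :\: tau) \in D]].

Definition ksign (K : fieldType) (n : nat) (tau : {set 'I_n}) (j : 'I_n) : K :=
  (-1) ^+ #|[set k in tau | (k < j)%N]|.

(* coefficient of e_u (x) x^(sigma\u) in d(e_tau (x) x^(sigma\tau)) *)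
Definition kcoef (K : fieldType) (n : nat) (tau u : {set 'I_n}) : K :=
  \sum_(j in tau) (if u == tau :\ j then ksign K tau j else 0).

(* Koszul differential from homological degree i to i-1 (row convention). *)
Definition kdiff (K : fieldType) (n : nat) (D : {set {set 'I_n}})
    (sigma : {set 'I_n}) (i : nat)
    : 'M[K]_(#|kbasis D sigma i|, #|kbasis D sigma i.-1|) :=
  \matrix_(a, b)
    (if i is 0 then 0
     else kcoef K (enum_val (A := kbasis D sigma i) a)
                  (enum_val (A := kbasis D sigma i.-1) b)).

(* beta_{i,sigma}(K[D]) = dim ker d_i - rank d_{i+1}. *)
Definition betti (K : fieldType) (n : nat) (D : {set {set 'I_n}})
    (sigma : {set 'I_n}) (i : nat) : nat :=
  (#|kbasis D sigma i| - \rank (kdiff K D sigma i) - \rank (kdiff K D sigma i.+1))%N.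

(* Double counting over F_q shows that a linear code D with support s satisfies
   q * (sum of the weights of its codewords) = (q - 1) * |D| * |s|.  For a constant
   weight code of weight w > 0 this determines |D| from s.  So if a codeword c of C
   is supported in Supp(C'), then C' + <c> has the support and the weight of C',
   hence the cardinality of C', and c lies in C'.  Thus C and C' have the same
   codewords supported in any tau inside Supp(C'); as the columns of a parity check
   matrix indexed by tau are independent iff no nonzero codeword is supported in
   tau, the two matroids agree below sigma.  The Koszul complex computing
   beta_(i, sigma) only sees faces inside sigma. *)

From HB Require Import structures.
From mathcomp Require Import all_boot all_order all_algebra all_field zify.
From Stdlib Require Import FunctionalExtensionality.
Set Implicit Arguments. Unset Strict Implicit. Unset Printing Implicit Defensive.
Import GRing.Theory.
Local Open Scope ring_scope.

Lemma kbasis_restrict n (D : {set {set 'I_n}}) sigma :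
  kbasis (restrict D sigma) sigma = kbasis D sigma.
Proof.
apply: functional_extensionality => i; apply/setP => tau.
by rewrite !inE subsetDl andbT.
Qed.

Lemma betti_restrict (K : fieldType) n (D : {set {set 'I_n}}) sigma i :
  betti K (restrict D sigma) sigma i = betti K D sigma i.
Proof. by rewrite /betti /kdiff kbasis_restrict. Qed.

Definition rsupp (R : nzRingType) n (c : 'rV[R]_n) : {set 'I_n} :=
  [set j | c 0 j != 0].

Lemma wt_eq0 (F : fieldType) n (c : 'rV[F]_n) : (wt c == 0%N) = (c == 0).
Proof.
rewrite cards_eq0; apply/eqP/eqP => [c0 | ->]; last by apply/setP => j; rewrite !inE mxE eqxx.
by apply/rowP => j; apply/eqP; move/setP: c0 => /(_ j); rewrite !inE mxE => /negbFE.
Qed.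

Lemma weight_count_card_inj (q w s N1 N2 : nat) :
  (0 < q * w)%N -> (0 < N1)%N -> (0 < N2)%N ->
  (q * (w * (N1 - 1)) = (q - 1) * N1 * s)%N ->
  (q * (w * (N2 - 1)) = (q - 1) * N2 * s)%N -> N1 = N2.
Proof.
move=> qw_gt0 N1_gt0 N2_gt0.
rewrite mulnA -mulnAC mulnBr muln1 => e1.
rewrite mulnA -mulnAC mulnBr muln1 => e2.
have e1' : (N1 * (q * w - (q - 1) * s) = q * w)%N by nia.
have e2' : (N2 * (q * w - (q - 1) * s) = q * w)%N by nia.
nia.
Qed.

Section Codewords.
Variables (F : finFieldType) (n : nat).

Definition codewords k (D : 'M[F]_(k, n)) : {set 'rV[F]_n} := [set d | (d <= D)%MS].

Lemma codewords0 k (D : 'M[F]_(k, n)) : 0 \in codewords D.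
Proof. by rewrite inE sub0mx. Qed.

Lemma card_codewords_gt0 k (D : 'M[F]_(k, n)) : (0 < #|codewords D|)%N.
Proof. by apply/card_gt0P; exists 0; rewrite codewords0. Qed.

Lemma supp_addsmx k1 k2 (A : 'M[F]_(k1, n)) (B : 'M[F]_(k2, n)) :
  supp (A + B)%MS = supp A :|: supp B.
Proof.
apply/setP => x; rewrite !inE; apply/existsP/orP => [[d /andP[]] | ].
  case/sub_addsmxP => -[a b] /= ->; rewrite mxE.
  case: (eqVneq ((a *m A) 0 x) 0) => [-> | ax _].
    by rewrite add0r => bx; right; apply/existsP; exists (b *m B); rewrite submxMl.
  by left; apply/existsP; exists (a *m A); rewrite submxMl.
case=> /existsP[d /andP[dS dx]]; exists d; rewrite dx andbT (submx_trans dS) //.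
  exact: addsmxSl.
exact: addsmxSr.
Qed.

Lemma supp_row (c : 'rV[F]_n) : supp c = rsupp c.
Proof.
apply/setP => x; rewrite !inE; apply/existsP/idP => [[d /andP[/sub_rVP[a ->]]] | cx].
  by rewrite mxE; apply: contraNneq => ->; rewrite mulr0.
by exists c; rewrite submx_refl.
Qed.

Lemma card_codewords_nz k (D : 'M[F]_(k, n)) j : j \in supp D ->
  (#|F| * #|[set d in codewords D | (d 0 j != 0)%R]| = (#|F| - 1) * #|codewords D|)%N.
Proof.
(* The codewords are the z + a u, with z vanishing at j, a in F and u j = 1. *)
rewrite inE => /existsP[d0 /andP[d0D d0j]].
have [u uD uj] : exists2 u : 'rV[F]_n, (u <= D)%MS & u 0 j = 1.
  by exists ((d0 0 j)^-1 *: d0); rewrite ?scalemx_sub // mxE mulVf.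
pose Z := [set d in codewords D | d 0 j == 0].
have cardD : #|codewords D| = (#|F| * #|Z|)%N.
  have -> : codewords D = [set p.2 + p.1 *: u | p in setX [set: F] Z].
    apply/setP => d; rewrite inE; apply/idP/imsetP => [dD | [[a z]]].
      exists (d 0 j, d - d 0 j *: u); rewrite ?addrNK // !inE.
      by rewrite addmx_sub ?eqmx_opp ?scalemx_sub //= !mxE uj mulr1 subrr.
    by rewrite !inE => /andP[_ /andP[zD _]] ->; rewrite addmx_sub ?scalemx_sub.
  rewrite -[#|F|]cardsT -cardsX card_in_imset // => -[a z] [b y].
  rewrite !inE /= => /andP[_ /eqP zj] /andP[_ /eqP yj] E.
  have ab : a = b by move/rowP/(_ j): E; rewrite !mxE uj !mulr1 zj yj !add0r.
  by move: E; rewrite ab => /addIr ->.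
have cardNZ : #|[set d in codewords D | (d 0 j != 0)%R]| = (#|codewords D| - #|Z|)%N.
  have -> : #|Z| = #|codewords D :&: [set d : 'rV[F]_n | d 0 j == 0]|.
    by apply: eq_card => d; rewrite !inE.
  rewrite -(cardsID [set d : 'rV[F]_n | d 0 j == 0] (codewords D)) addKn.
  by apply: eq_card => d; rewrite !inE andbC.
by rewrite cardNZ cardD mulnBr mulnBl mul1n mulnA.
Qed.

Lemma sum_wt_codewords k (D : 'M[F]_(k, n)) :
  (#|F| * \sum_(d in codewords D) wt d = (#|F| - 1) * #|codewords D| * #|supp D|)%N.
Proof.
have -> : (\sum_(d in codewords D) wt d =
           \sum_j #|[set d in codewords D | (d 0 j != 0)%R]|)%N.
  under eq_bigr do rewrite /wt -sum1dep_card.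
  under [RHS]eq_bigr do rewrite -sum1dep_card.
  by rewrite (exchange_big_dep xpredT).
rewrite big_distrr /= (bigID (mem (supp D))) /=.
rewrite [X in (_ + X)%N]big1 ?addn0 => [|j jNsupp].
  rewrite (eq_bigr _ (fun j => card_codewords_nz (D := D) (j := j))).
  by rewrite sum_nat_const mulnC.
apply/eqP; rewrite muln_eq0 cards_eq0; apply/orP; right; apply/eqP/setP => d.
rewrite !inE; apply: contraNF jNsupp => /andP[dD dj].
by rewrite inE; apply/existsP; exists d; rewrite dD.
Qed.

Lemma sum_wt_codewords_const k (D : 'M[F]_(k, n)) w :
    (forall c : 'rV[F]_n, (c <= D)%MS -> c != 0 -> wt c = w) ->
  (\sum_(d in codewords D) wt d = w * (#|codewords D| - 1))%N.
Proof.
move=> D_wt; have wt0 : wt (0 : 'rV[F]_n) = 0%N by apply/eqP; rewrite wt_eq0.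
rewrite (bigD1 0) ?codewords0 //= wt0 add0n (eq_bigr (fun=> w)) => [|d /andP[]]; last first.
  by rewrite inE; exact: D_wt.
rewrite sum_nat_const mulnC [#|codewords D|](cardD1 0) codewords0 add1n subn1 /=; congr (_ * _)%N.
by apply: eq_card => d; rewrite [RHS]inE /= andbC.
Qed.

Lemma constant_weight_sub_supp k k' (C : 'M[F]_(k, n)) (C' : 'M[F]_(k', n))
    (c : 'rV[F]_n) :
  constant_weight C -> (C' <= C)%MS -> (c <= C)%MS -> rsupp c \subset supp C' ->
  (c <= C')%MS.
Proof.
move=> [w C_wt] sC'C cC c_supp; have [-> | c_nz] := eqVneq c 0; first exact: sub0mx.
have w_gt0 : (0 < w)%N by rewrite lt0n -(C_wt c cC c_nz) wt_eq0.
pose C'c := (C' + c)%MS.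
have C'c_wt d : (d <= C'c)%MS -> d != 0 -> wt d = w.
  by move=> dC'c; apply: C_wt; rewrite (submx_trans dC'c) // addsmx_sub sC'C cC.
have C'_wt d : (d <= C')%MS -> d != 0 -> wt d = w.
  by move=> dC'; apply: C'c_wt; rewrite (submx_trans dC') ?addsmxSl.
have suppC'c : supp C'c = supp C' by rewrite supp_addsmx supp_row; apply/setUidPl.
have sub_codewords : codewords C' \subset codewords C'c.
  by apply/subsetP => d; rewrite !inE => dC'; rewrite (submx_trans dC') ?addsmxSl.
have cardE : #|codewords C'| = #|codewords C'c|.
  apply: (@weight_count_card_inj #|F| w #|supp C'|); rewrite ?card_codewords_gt0 //.
  - by rewrite muln_gt0 w_gt0 andbT; apply/card_gt0P; exists 0.
  - by rewrite -(sum_wt_codewords_const C'_wt) sum_wt_codewords.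
  by rewrite -(sum_wt_codewords_const C'c_wt) sum_wt_codewords suppC'c.
have : c \in codewords C'c by rewrite inE addsmxSr.
have -> : codewords C'c = codewords C'.
  by apply/esym/eqP; rewrite eqEcard sub_codewords cardE leqnn.
by rewrite inE.
Qed.

End Codewords.

Section IndepCols.
Variables (F : fieldType) (n : nat) (tau : {set 'I_n}).

Let f : 'I_#|tau| -> 'I_n := enum_val.
(* The row vector u indexed by tau, extended by zeros outside tau. *)
Let ext (u : 'rV[F]_#|tau|) : 'rV[F]_n := u *m rowsub f 1%:M.

Lemma zero_extend_enum_val u t : ext u 0 (f t) = u 0 t.
Proof.
rewrite !mxE (bigD1 t) //= big1 ?addr0 => [|s st]; rewrite !mxE ?eqxx ?mulr1 //.
by rewrite (inj_eq enum_val_inj) (negbTE st) mulr0.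
Qed.

Lemma zero_extend_notin u x : x \notin tau -> ext u 0 x = 0.
Proof.
move=> xNtau; rewrite !mxE big1 // => t _; rewrite !mxE.
case: eqP => [xE | _]; last by rewrite mulr0.
by rewrite -xE enum_valP in xNtau.
Qed.

Lemma rsupp_zero_extend u : rsupp (ext u) \subset tau.
Proof. by apply/subsetP => x; rewrite inE; apply: contraR => /zero_extend_notin ->. Qed.

Lemma zero_extend_colsub (c : 'rV[F]_n) : rsupp c \subset tau -> ext (colsub f c) = c.
Proof.
move=> /subsetP c_tau; apply/rowP => x; case: (boolP (x \in tau)) => [x_tau | xNtau].
  by rewrite -(enum_rankK_in x_tau x_tau) zero_extend_enum_val mxE.
rewrite zero_extend_notin //; apply/esym/eqP; apply: contraR xNtau => cx.
by apply: c_tau; rewrite inE.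
Qed.

Lemma indep_colsP r (H : 'M[F]_(r, n)) :
  reflect (forall c : 'rV[F]_n, c *m H^T = 0 -> rsupp c \subset tau -> c = 0)
          (indep_cols H tau).
Proof.
rewrite /indep_cols -mxrank_tr trmx_mxsub /= rowsubE -/(row_free _).
apply: (iffP idP) => [free_tau c cH c_tau | H_tau].
  have cE : colsub f c *m rowsub f 1%:M = c := zero_extend_colsub c_tau.
  rewrite -cE; suff -> : colsub f c = 0 by rewrite mul0mx.
  by apply: (row_free_inj free_tau); rewrite mul0mx mulmxA cE.
apply: inj_row_free => u; rewrite mulmxA => uH; apply/rowP => t.
by rewrite -[u 0 t]zero_extend_enum_val /ext (H_tau _ uH (rsupp_zero_extend u)) !mxE.
Qed.

End IndepCols.

Lemma parity_check_indepP (F : fieldType) n k r (D : 'M[F]_(k, n)) (H : 'M[F]_(r, n))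
    (tau : {set 'I_n}) :
  is_parity_check D H ->
  reflect (forall c : 'rV[F]_n, (c <= D)%MS -> rsupp c \subset tau -> c = 0)
          (indep_cols H tau).
Proof.
move=> [_ DH]; apply: (iffP (indep_colsP _ H)) => tau_indep c /DH; exact: tau_indep.
Qed.

Theorem lemma3 (F : finFieldType) (n k k' r r' : nat)
    (C : 'M[F]_(k, n)) (C' : 'M[F]_(k', n))
    (HC : 'M[F]_(r, n)) (HC' : 'M[F]_(r', n)) :
  constant_weight C ->
  is_parity_check C HC ->
  (C' <= C)%MS ->
  is_parity_check C' HC' ->
  forall sigma : {set 'I_n}, sigma \subset supp C' ->
    restrict (matroid HC') sigma = restrict (matroid HC) sigma /\
    (forall (K : fieldType) (i : nat),
        betti K (matroid HC') sigma i = betti K (matroid HC) sigma i).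
Proof.
move=> cwC pC sC'C pC' sigma sigma_supp.
have restrictE : restrict (matroid HC') sigma = restrict (matroid HC) sigma.
  apply/setP => tau; rewrite !inE; have [tau_sigma | _] := boolP (tau \subset sigma).
    rewrite !andbT; apply/(parity_check_indepP _ pC')/(parity_check_indepP _ pC).
    + move=> tau_indep c cC c_tau; apply: (tau_indep _ _ c_tau).
      apply: constant_weight_sub_supp cwC sC'C cC _.
      exact: subset_trans c_tau (subset_trans tau_sigma sigma_supp).
    + by move=> tau_indep c cC'; apply: tau_indep; apply: submx_trans cC' sC'C.
  by rewrite !andbF.
by split=> // K i; rewrite -betti_restrict restrictE betti_restrict.
Qed.
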